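(* Let $X$ and $Y$ be uncertain variables on a common set $\Omega$ with finite ranges $[\![X]\!]$ and $[\![Y]\!]$. Then $$\mathcal{L}_\star(X\rightarrow Y)\leq \sup_{P}\ \widetilde{\mathcal{L}}_P(X\rightarrow Y)+H_0(X\mid Y),$$ where the supremum is over all conditional probability mass functions $P=(P(y\mid x))_{x\in[\![X]\!],\,y\in[\![Y]\!]}$ (i.e., $P(y\mid x)\ge 0$ and $\sum_{y\in[\![Y]\!]}P(y\mid x)=1$ for each $x$), and $\widetilde{\mathcal{L}}_P(X\rightarrow Y):=\log_2\Big(\sum_{y\in[\![Y]\!]}\max_{x\in[\![X]\!]}P(y\mid x)\Big)$ is the maximal stochastic leakage of the channel $P$.
   Context: Let $\Omega$ be a set. An uncertain variable (uv) is a map $X:\Omega\to\mathbb{X}$ into some set; all uvs considered have finite ranges. The range of $X$ is $[\![X]\!]:=\{X(\omega):\omega\in\Omega\}$; the conditional range is $[\![X\mid Y(\omega)=y]\!]:=\{X(\omega):\omega\in\Omega,\ Y(\omega)=y\}$. Conditional non-stochastic entropy: $H_0(X\mid Y):=\max_{y\in[\![Y]\!]}\log_2|[\![X\mid Y(\omega)=y]\!]|$. The non-stochastic brute-force guessing leakage from a uv $U$ to a uv $Y$ is $$\mathcal{L}(U\rightarrow Y):=\log_2\left(\frac{|[\![U]\!]|}{\min_{y\in[\![Y]\!]}|[\![U\mid Y(\omega)=y]\!]|}\right).$$ The maximal non-stochastic brute-force leakage from $X$ to $Y$ is $$\mathcal{L}_\star(X\rightarrow Y):=\sup_{g}\ \mathcal{L}(g\circ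 X\rightarrow Y),$$ where the supremum ranges over all finite sets $\mathcal{U}$ and all functions $g:[\![X]\!]\to\mathcal{U}$. *)

From HB Require Import structures.
From mathcomp Require Import all_boot all_order all_algebra.
From mathcomp Require Import boolp classical_sets reals exp.
Set Implicit Arguments. Unset Strict Implicit. Unset Printing Implicit Defensive.
Import Order.TTheory GRing.Theory Num.Theory.
Local Open Scope ring_scope.

Section Defs.
Variable R : realType.

Definition log2 (x : R) : R := ln x / ln 2.

Definition urange (Omega : Type) (T : finType) (X : Omega -> T) : {set T} :=
  finset (fun x => `[< exists w, X w = x >]).

Definition ucrange (Omega : Type) (TX TY : finType) (X : Omega -> TX)
  (Y : Omega -> TY) (y : TY) : {set TX} :=
  finset (fun x => `[< exists w, Y w = y /\ X w = x >]).

Definition H0 (Omega : Type) (TX TY : finType) (X : Omega -> TX)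
  (Y : Omega -> TY) : R :=
  \big[Num.max/0]_(y in urange Y) log2 #|ucrange X Y y|%:R.

Definition nleak (Omega : Type) (TU TY : finType) (U : Omega -> TU)
  (Y : Omega -> TY) : R :=
  log2 (#|urange U|%:R /
        (\big[minn/#|urange U|]_(y in urange Y) #|ucrange U Y y|)%:R).

Definition nleak_star (Omega : Type) (TX TY : finType) (X : Omega -> TX)
  (Y : Omega -> TY) : R :=
  sup [set l | exists (U : finType) (g : TX -> U), l = nleak (g \o X) Y]%classic.

(* P is a conditional pmf P(y|x), x in [[X]], y in [[Y]] (values outside
   these ranges are irrelevant) *)
Definition is_channel (Omega : Type) (TX TY : finType) (X : Omega -> TX)
  (Y : Omega -> TY) (P : TX -> TY -> R) : Prop :=
  forall x, x \in urange X ->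
    (forall y, y \in urange Y -> 0 <= P x y) /\
    \sum_(y in urange Y) P x y = 1.

Definition sleak (Omega : Type) (TX TY : finType) (X : Omega -> TX)
  (Y : Omega -> TY) (P : TX -> TY -> R) : R :=
  log2 (\sum_(y in urange Y) \big[Num.max/0]_(x in urange X) P x y).

Definition sup_sleak (Omega : Type) (TX TY : finType) (X : Omega -> TX)
  (Y : Omega -> TY) : R :=
  sup [set l | exists P : TX -> TY -> R, is_channel X Y P /\ l = sleak X Y P]%classic.

End Defs.

From HB Require Import structures.
From mathcomp Require Import all_boot all_order all_algebra.
From mathcomp Require Import boolp classical_sets reals exp.
Import Order.TTheory GRing.Theory Num.Theory.
Local Open Scope ring_scope.

(* Upper side: every guessing leakage L(g o X -> Y) is at most
   log2 |[[g o X]]| <= log2 |[[X]]|, because the denominator of L is a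
   positive integer and g can only merge values; hence
   L_*(X -> Y) <= log2 |[[X]]|.

   Lower side: choose a selector h : [[X]] -> [[Y]] with x in [[X | Y = h x]]
   for every x, and let K = |h([[X]])|.  The deterministic channel
   P(y|x) = [y = h x] has stochastic leakage exactly log2 K, and the fibres
   of h cover [[X]] by at most K conditional ranges, each of size at most
   M = max_y |[[X | Y = y]]|, so |[[X]]| <= K * M.  Since log2 M <= H_0(X|Y)
   we get  log2 |[[X]]| <= log2 K + log2 M <= sup_P L~_P + H_0(X|Y).
   When [[X]] is empty both sides degenerate to 0. *)

Section Log2.
Context {R : realType}.

Lemma ln2_gt0 : 0 < ln (2 : R).
Proof. by apply: ln_gt0; rewrite ltr1n. Qed.

Lemma log2_0 : log2 (0 : R) = 0.
Proof. by rewrite /log2 ln0 ?mul0r. Qed.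

Lemma ler_log2 (a b : R) : 0 < a -> a <= b -> log2 a <= log2 b.
Proof.
move=> a0 ab; apply: ler_wpM2r; first by rewrite invr_ge0 ltW ?ln2_gt0.
by rewrite ler_ln // posrE // (lt_le_trans a0 ab).
Qed.

Lemma log2M (a b : R) : 0 < a -> 0 < b -> log2 (a * b) = log2 a + log2 b.
Proof. by move=> a0 b0; rewrite /log2 lnM ?posrE // mulrDl. Qed.

(* The crude bound log2 s <= s / ln 2, used to show that the set of
   stochastic leakages is bounded above. *)
Lemma log2_le_linear (s : R) : 0 <= s -> log2 s <= s / ln 2.
Proof.
move=> s0; apply: ler_wpM2r; first by rewrite invr_ge0 ltW ?ln2_gt0.
have [s1|s1] := leP s 1; first exact: le_trans (ln_le0 s1) s0.
by apply/ltW/ln_sublinear/(lt_trans _ s1).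
Qed.

(* On naturals log2 0 = 0 is harmless: log2 n%:R is nonnegative and
   monotone, and subadditive with respect to products. *)
Lemma log2_nat_ge0 (n : nat) : 0 <= log2 (n%:R : R).
Proof.
case: n => [|n]; first by rewrite log2_0.
rewrite /log2 mulr_ge0 //; last by rewrite invr_ge0 ltW ?ln2_gt0.
by rewrite ln_ge0 // ler1n.
Qed.

Lemma ler_log2_nat {m n : nat} : (m <= n)%N -> log2 (m%:R : R) <= log2 n%:R.
Proof.
case: m => [|m] mn; first by rewrite log2_0 log2_nat_ge0.
by rewrite ler_log2 ?ltr0n ?ler_nat.
Qed.

Lemma log2_natM_le (m n : nat) :
  log2 ((m * n)%:R : R) <= log2 m%:R + log2 n%:R.
Proof.
case: m => [|m]; first by rewrite mul0n log2_0 addr_ge0 ?log2_nat_ge0.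
case: n => [|n]; first by rewrite muln0 log2_0 addr_ge0 ?log2_nat_ge0.
by rewrite natrM log2M ?ltr0n.
Qed.

End Log2.

Section Ranges.
Context {Omega : Type} {TX TY : finType} {X : Omega -> TX} {Y : Omega -> TY}.

Lemma mem_urange (T : finType) (Z : Omega -> T) (z : T) :
  (z \in urange Z) = `[< exists w, Z w = z >].
Proof. by rewrite inE. Qed.

Lemma mem_ucrange (x : TX) (y : TY) :
  (x \in ucrange X Y y) = `[< exists w, Y w = y /\ X w = x >].
Proof. by rewrite inE. Qed.

Lemma ucrange_urange {x : TX} {y : TY} : x \in ucrange X Y y -> y \in urange Y.
Proof.
rewrite mem_ucrange mem_urange => /asboolP[w [Yw _]].
by apply/asboolP; exists w.
Qed.

Lemma card_urange_comp (U : finType) (g : TX -> U) :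
  (#|urange (g \o X)| <= #|urange X|)%N.
Proof.
apply: leq_trans (leq_imset_card g (urange X)); apply: subset_leq_card.
apply/fintype.subsetP => u; rewrite mem_urange => /asboolP[w <-].
by apply: imset_f; rewrite mem_urange; apply/asboolP; exists w.
Qed.

Lemma exists_selector : urange X != finset.set0 ->
  exists h : TX -> TY, forall x, x \in urange X -> x \in ucrange X Y (h x).
Proof.
case/finset.set0Pn=> x0; rewrite mem_urange => /asboolP[w0 _].
suff /choice[h hP] : forall x, exists y : TY,
    x \in urange X -> x \in ucrange X Y y by exists h.
move=> x; have [[w Xw]|noX] := pselect (exists w, X w = x).
  by exists (Y w) => _; rewrite mem_ucrange; apply/asboolP; exists w.
by exists (Y w0); rewrite mem_urange => /asboolP /noX.
Qed.

(* If every x lies in the conditional range indexed by h x, the fibres of h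
   cover [[X]] by |h([[X]])| sets, each inside one conditional range. *)
Lemma card_urange_le_selector {h : TX -> TY} :
  (forall x, x \in urange X -> x \in ucrange X Y (h x)) ->
  (#|urange X| <= #|h @: urange X| * \max_(y in urange Y) #|ucrange X Y y|)%N.
Proof.
move=> hP; rewrite -sum1_card (partition_big_imset h) /= -sum_nat_const.
apply: leq_sum => _ /imsetP[x0 x0X ->]; rewrite sum1dep_card.
have hx0Y := ucrange_urange (hP _ x0X).
rewrite (bigD1 (h x0)) //= leq_max subset_leq_card //.
apply/fintype.subsetP => x; rewrite inE => /andP[xX /eqP <-].
exact: hP.
Qed.

End Ranges.

Section GuessingLeakage.
Context {R : realType} {Omega : Type} {TU TY : finType}.
Context {U : Omega -> TU} {Y : Omega -> TY}.

(* The minimum in the denominator of L(U -> Y) is positive whenever [[U]]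
   is nonempty, since every conditional range [[U | Y = y]] is nonempty. *)
Lemma min_ucrange_gt0 : (0 < #|urange U|)%N ->
  (0 < \big[minn/#|urange U|]_(y in urange Y) #|ucrange U Y y|)%N.
Proof.
move=> U0; elim/big_ind: _ => // [a b a0 b0|y]; first by rewrite leq_min a0.
rewrite mem_urange => /asboolP[w Yw]; apply/card_gt0P; exists (U w).
by rewrite mem_ucrange; apply/asboolP; exists w.
Qed.

(* Dividing by that positive integer can only decrease |[[U]]|. *)
Lemma nleak_le_log2_card : nleak R U Y <= log2 (#|urange U|%:R).
Proof.
rewrite /nleak; have [->|U0] := posnP #|urange U|; first by rewrite mul0r.
have m0 := min_ucrange_gt0 U0.
apply: ler_log2; first by rewrite divr_gt0 ?ltr0n.
by rewrite ler_pdivrMr ?ltr0n // ler_peMr ?ler0n // ler1n.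
Qed.

End GuessingLeakage.

Section Leakages.
Context {R : realType} {Omega : Type} {TX TY : finType}.
Context {X : Omega -> TX} {Y : Omega -> TY}.

Lemma nleak_star_le_log2_card : nleak_star R X Y <= log2 (#|urange X|%:R).
Proof.
apply: ge_sup; first by exists (nleak R (id \o X) Y), TX, id.
move=> _ [U [g ->]]; apply: le_trans nleak_le_log2_card _.
exact/ler_log2_nat/card_urange_comp.
Qed.

Lemma H0_ge (y : TY) :
  y \in urange Y -> log2 (#|ucrange X Y y|%:R) <= H0 R X Y.
Proof. by move=> yY; rewrite /H0 (bigD1 y) //= le_max lexx. Qed.

Lemma H0_ge0 : 0 <= H0 R X Y.
Proof.
rewrite /H0; elim/big_ind: _ => // [a b a0 _|y _]; last exact: log2_nat_ge0.
by rewrite le_max a0.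
Qed.

(* H_0(X|Y) is at least log2 of the largest conditional range (the
   maximum is attained, and both sides are 0 if [[Y]] is empty). *)
Lemma log2_max_ucrange_le_H0 :
  log2 ((\max_(y in urange Y) #|ucrange X Y y|)%:R) <= H0 R X Y.
Proof.
have [Y0|/card_gt0P[y yY]] := posnP #|urange Y|.
  rewrite big_pred0 => [|y]; first by rewrite log2_0 H0_ge0.
  by rewrite (card0_eq Y0).
have Y_gt0 : (0 < #|urange Y|)%N by apply/card_gt0P; exists y.
have [y0 y0Y ->] := eq_bigmax_cond (fun y => #|ucrange X Y y|) Y_gt0.
exact: H0_ge.
Qed.

(* Summing a channel's column maxima is at most summing all its entries,
   i.e. |[[X]]|; so stochastic leakages are bounded above. *)
Lemma sleak_le_card (P : TX -> TY -> R) :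
  is_channel X Y P -> sleak X Y P <= #|urange X|%:R / ln 2.
Proof.
move=> chP; have P0 x y : x \in urange X -> y \in urange Y -> 0 <= P x y.
  by move=> xX; case: (chP x xX) => + _; apply.
have colmax0 y : y \in urange Y -> 0 <= \big[Num.max/0]_(x in urange X) P x y.
  by move=> yY; elim/big_ind: _ => // [a b a0 _|x xX]; rewrite ?le_max ?a0 ?P0.
rewrite /sleak (le_trans (log2_le_linear _ (sumr_ge0 _ colmax0))) //.
apply: ler_wpM2r; first by rewrite invr_ge0 ltW ?ln2_gt0.
apply: (@le_trans _ _ (\sum_(y in urange Y) \sum_(x in urange X) P x y)).
  apply: ler_sum => y yY; elim/big_ind: _ => [||x xX].
  - by rewrite sumr_ge0 // => x xX; rewrite P0.
  - by move=> a b aS bS; rewrite ge_max aS bS.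
  - rewrite (bigD1 x) //= lerDl sumr_ge0 // => x' /andP[x'X _].
    by rewrite P0.
rewrite exchange_big /= (eq_bigr (fun _ => 1)) ?sumr_const // => x xX.
by case: (chP x xX).
Qed.

Lemma sleak_le_sup (P : TX -> TY -> R) :
  is_channel X Y P -> sleak X Y P <= sup_sleak R X Y.
Proof.
move=> chP; apply: sup_upper_bound; last by exists P.
split; first by exists (sleak X Y P), P.
by exists (#|urange X|%:R / ln 2) => _ [Q [chQ ->]]; apply: sleak_le_card.
Qed.

End Leakages.

Section DeterministicChannel.
Context {R : realType} {Omega : Type} {TX TY : finType}.
Context {X : Omega -> TX} {Y : Omega -> TY}.
Variable h : TX -> TY.

Definition det_channel : TX -> TY -> R := fun x y => (y == h x)%:R.

Hypothesis h_urange : forall x, x \in urange X -> h x \in urange Y.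

Lemma det_channel_is_channel : is_channel X Y det_channel.
Proof.
move=> x xX; split=> [y _|]; first by rewrite ler0n.
rewrite (bigD1 (h x)) ?h_urange //= /det_channel eqxx big1 ?addr0 //.
by move=> y /andP[_ /negbTE ->].
Qed.

Lemma det_channel_colmax (y : TY) :
  \big[Num.max/0]_(x in urange X) det_channel x y = (y \in h @: urange X)%:R.
Proof.
case: imsetP => [[x xX ->]|noimg].
  apply/le_anti/andP; split.
    elim/big_ind: _ => // [a b a1 b1|x' _];
      by rewrite ?ge_max ?a1 ?b1 ?lern1 ?leq_b1.
  by rewrite (bigD1 x) //= /det_channel eqxx le_max lexx.
elim/big_ind: _ => // [a b -> ->|x xX]; first by rewrite maxxx.
rewrite /det_channel; case: eqP => // yh.
by case: noimg; exists x.
Qed.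

Lemma sleak_det_channel : sleak X Y det_channel = log2 (#|h @: urange X|%:R).
Proof.
have img_sub : h @: urange X \subset urange Y.
  by apply/fintype.subsetP => _ /imsetP[x xX ->]; apply: h_urange.
rewrite /sleak (eq_bigr _ (fun y _ => det_channel_colmax y)).
rewrite (big_setID (h @: urange X)) /= (finset.setIidPr img_sub).
rewrite (eq_bigr (fun _ => 1)) => [|y yimg]; last by rewrite yimg.
rewrite [X in _ + X]big1 ?addr0 ?sumr_const // => y.
by rewrite finset.in_setD => /andP[/negbTE ->].
Qed.

End DeterministicChannel.

Theorem proposition6 (R : realType) (Omega : Type) (TX TY : finType)
  (X : Omega -> TX) (Y : Omega -> TY) :
  nleak_star R X Y <= sup_sleak R X Y + H0 R X Y.
Proof.
apply: le_trans nleak_star_le_log2_card _.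
have [X0|/(exists_selector (Y := Y))[h hP]] := eqVneq (urange X) finset.set0.
  (* [[X]] is empty: the zero channel witnesses sup_P L~_P >= 0. *)
  have zero_channel : is_channel X Y (fun _ _ => 0 : R).
    by move=> x; rewrite X0 inE.
  rewrite X0 cards0 log2_0 addr_ge0 ?H0_ge0 //.
  apply: (le_trans _ (sleak_le_sup _ zero_channel)).
  by rewrite /sleak big1 ?log2_0 // => y _; rewrite X0 big_set0.
have h_urange x : x \in urange X -> h x \in urange Y.
  by move=> /hP /ucrange_urange.
apply: le_trans (ler_log2_nat (card_urange_le_selector hP)) _.
apply: le_trans (log2_natM_le _ _) _; apply: lerD.
  rewrite -(sleak_det_channel h h_urange).
  exact: sleak_le_sup _ (det_channel_is_channel h h_urange).
exact: log2_max_ucrange_le_H0.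
Qed.
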